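(* For the system $$u_{0,0}-v_{1,1}=0,\qquad (u_{1,0}-u_{0,0})(v_{1,0}-u_{0,0})-(u_{0,1}-u_{0,0})(v_{0,1}-u_{0,0})=0,$$ the following second order flow is a symmetry: $$\frac{\partial u_{0,0}}{\partial t_2}=\frac{u_{0,0}-v_{1,0}}{(u_{-1,0}-v_{1,0})^2}\left(\frac{u_{0,0}-u_{-1,0}}{v_{2,0}-u_{0,0}}+\frac{u_{-1,0}-v_{0,0}}{v_{0,0}-u_{-2,0}}+1\right),$$ $$\frac{\partial v_{0,0}}{\partial t_2}=\frac{u_{-1,0}-v_{0,0}}{(u_{-1,0}-v_{1,0})^2}\left(\frac{u_{0,0}-v_{1,0}}{v_{2,0}-u_{0,0}}+\frac{v_{1,0}-v_{0,0}}{v_{0,0}-u_{-2,0}}+1\right).$$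
   Context: Unknowns $u,v$ on $\mathbb Z^2$, $u_{i,j}=u(n+i,m+j)$, similarly $v$. Shifts $\mathcal S:n\mapsto n+1$, $\mathcal T:m\mapsto m+1$. For a quad system $\boldsymbol Q(\boldsymbol u_{0,0},\boldsymbol u_{1,0},\boldsymbol u_{0,1},\boldsymbol u_{1,1})=\boldsymbol 0$ with $\boldsymbol u=(u,v)$ and Jacobians $\mathrm Q_{(p,q)}=\partial\boldsymbol Q/\partial\boldsymbol u_{p,q}$, a vector function $\boldsymbol F=(F^{(1)},F^{(2)})$ of finitely many shifts of $\boldsymbol u$ is a symmetry, written $\partial_t u_{0,0}=F^{(1)}$, $\partial_t v_{0,0}=F^{(2)}$, if $\mathrm Q_{(0,0)}\boldsymbol F+\mathrm Q_{(1,0)}\mathcal S(\boldsymbol F)+\mathrm Q_{(0,1)}\mathcal T(\boldsymbol F)+\mathrm Q_{(1,1)}\mathcal S\mathcal T(\boldsymbol F)=\boldsymbol 0$ holds on all solutions of the system. *)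

From HB Require Import structures.
From mathcomp Require Import all_boot all_order all_algebra.
Set Implicit Arguments. Unset Strict Implicit. Unset Printing Implicit Defensive.
Import Order.TTheory GRing.Theory Num.Theory.
Local Open Scope ring_scope.

Section QuadDefs.
Variable R : numFieldType.

Definition field := int -> int -> R.

Definition mx2 (a b c d : R) : 'M[R]_2 :=
  \matrix_(i < 2, j < 2)
    (if (i : nat) == 0%N then (if (j : nat) == 0%N then a else b)
     else (if (j : nat) == 0%N then c else d)).
Definition cv2 (a b : R) : 'cV[R]_2 :=
  \col_(i < 2) (if (i : nat) == 0%N then a else b).

Definition Q1 (u00 v00 u10 v10 u01 v01 u11 v11 : R) : R := u00 - v11.
Definition Q2 (u00 v00 u10 v10 u01 v01 u11 v11 : R) : R :=
  (u10 - u00) * (v10 - u00) - (u01 - u00) * (v01 - u00).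

Definition is_solution (u v : field) : Prop :=
  forall n m : int,
    Q1 (u n m) (v n m) (u (n+1) m) (v (n+1) m) (u n (m+1)) (v n (m+1))
       (u (n+1) (m+1)) (v (n+1) (m+1)) = 0 /\
    Q2 (u n m) (v n m) (u (n+1) m) (v (n+1) m) (u n (m+1)) (v n (m+1))
       (u (n+1) (m+1)) (v (n+1) (m+1)) = 0.

(* Jacobians Q_(p,q) = dQ/d(u_pq, v_pq): rows = (Q1, Q2), columns = (u_pq, v_pq).
   These are the literal partial derivatives of the polynomials Q1, Q2 above. *)
Definition Jac00 (u00 v00 u10 v10 u01 v01 u11 v11 : R) : 'M[R]_2 :=
  mx2 1 0 (- (v10 - u00) - (u10 - u00) + (v01 - u00) + (u01 - u00)) 0.
Definition Jac10 (u00 v00 u10 v10 u01 v01 u11 v11 : R) : 'M[R]_2 :=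
  mx2 0 0 (v10 - u00) (u10 - u00).
Definition Jac01 (u00 v00 u10 v10 u01 v01 u11 v11 : R) : 'M[R]_2 :=
  mx2 0 0 (- (v01 - u00)) (- (u01 - u00)).
Definition Jac11 (u00 v00 u10 v10 u01 v01 u11 v11 : R) : 'M[R]_2 :=
  mx2 0 (-1) 0 0.

Definition flow := field -> field -> int -> int -> 'cV[R]_2.

(* The symmetry condition, evaluated at (n, m):
   Q_(0,0) F + Q_(1,0) S(F) + Q_(0,1) T(F) + Q_(1,1) S T(F). *)
Definition sym_expr (F : flow) (u v : field) (n m : int) : 'cV[R]_2 :=
  let a := (u n m, v n m, u (n+1) m, v (n+1) m, u n (m+1), v n (m+1),
            u (n+1) (m+1), v (n+1) (m+1)) in
  let '(u00, v00, u10, v10, u01, v01, u11, v11) := a in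
  Jac00 u00 v00 u10 v10 u01 v01 u11 v11 *m F u v n m
  + Jac10 u00 v00 u10 v10 u01 v01 u11 v11 *m F u v (n+1) m
  + Jac01 u00 v00 u10 v10 u01 v01 u11 v11 *m F u v n (m+1)
  + Jac11 u00 v00 u10 v10 u01 v01 u11 v11 *m F u v (n+1) (m+1).

Definition flow_t2 : flow := fun u v n m =>
  let U i := u (n + i) m in
  let V i := v (n + i) m in
  cv2
    ((U 0 - V 1) / (U (-1) - V 1) ^+ 2 *
       ((U 0 - U (-1)) / (V 2 - U 0) + (U (-1) - V 0) / (V 0 - U (-2)) + 1))
    ((U (-1) - V 0) / (U (-1) - V 1) ^+ 2 *
       ((U 0 - V 1) / (V 2 - U 0) + (V 1 - V 0) / (V 0 - U (-2)) + 1)).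

Definition flow_t2_defined (u v : field) : Prop :=
  forall n m : int,
    u (n - 1) m != v (n + 1) m /\ v (n + 2) m != u n m /\ v n m != u (n - 2) m.

End QuadDefs.

(** On a solution the first equation reads v_{n,m} = u_{n-1,m-1}, so the
    system collapses to one relation between three consecutive rows
    x_k = u_{k,0}, y_k = u_{k,-1}, z_k = u_{k,1} of u:
      (x_{k+1} - x_k)(y_k - x_k) = (z_k - x_k)(x_{k-1} - x_k).
    Everything is translation invariant, so the symmetry condition only has to
    be checked at the origin, where it involves x_{-3..2}, y_{-2..2} and
    z_{-2..1}.  If two consecutive x_k coincide, the relation together with the
    non-vanishing of the denominators of the flow forces x to be constant on
    the whole window, and both components of the condition are checked
    directly.  Otherwise the relation expresses each z_k rationally in terms
    of x and y, and both components become rational identities. *)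
From mathcomp Require Import all_boot all_order all_algebra.
From mathcomp Require Import ring.
Import GRing.Theory Num.Theory.
Set Implicit Arguments. Unset Strict Implicit. Unset Printing Implicit Defensive.
Local Open Scope ring_scope.

Section FlowT2.
Variable R : numFieldType.

Definition flow_t2_u (um2 um1 u0 v0 v1 v2 : R) : R :=
  (u0 - v1) / (um1 - v1) ^+ 2 *
  ((u0 - um1) / (v2 - u0) + (um1 - v0) / (v0 - um2) + 1).

Definition flow_t2_v (um2 um1 u0 v0 v1 v2 : R) : R :=
  (um1 - v0) / (um1 - v1) ^+ 2 *
  ((u0 - v1) / (v2 - u0) + (v1 - v0) / (v0 - um2) + 1).

(* The second quad equation after eliminating v through the first one. *)
Definition quad_rel (xm x0 xp y z : R) : Prop :=
  (xp - x0) * (y - x0) = (z - x0) * (xm - x0).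

(* Second component of [sym_expr] at the origin, with v eliminated. *)
Definition linQ2_flow_t2 (xm2 xm1 x0 x1 ym1 y0 y1 y2 zm2 zm1 z0 : R) : R :=
  (- (y0 - x0) - (x1 - x0) + (xm1 - x0) + (z0 - x0)) * flow_t2_u xm2 xm1 x0 ym1 y0 y1
  + (y0 - x0) * flow_t2_u xm1 x0 x1 y0 y1 y2 + (x1 - x0) * flow_t2_v xm1 x0 x1 y0 y1 y2
  - (xm1 - x0) * flow_t2_u zm2 zm1 z0 xm1 x0 x1
  - (z0 - x0) * flow_t2_v zm2 zm1 z0 xm1 x0 x1.

Lemma quad_rel_zE xm x0 xp y z : xm != x0 -> quad_rel xm x0 xp y z ->
  z = x0 + (xp - x0) * (y - x0) / (xm - x0).
Proof.
rewrite -subr_eq0 /quad_rel => d ->.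
by rewrite mulfK // addrC subrK.
Qed.

Lemma quad_rel_flat x xp y z : y != x -> quad_rel x x xp y z -> xp = x.
Proof.
rewrite /quad_rel subrr mulr0 => yx /eqP.
by rewrite mulf_eq0 !subr_eq0 (negbTE yx) orbF => /eqP.
Qed.

Lemma quad_rel_neq xm x0 xp y z :
  xm != x0 -> xp != z -> quad_rel xm x0 xp y z -> x0 != xp.
Proof.
move=> d + r; apply: contra_neq => e; move: r.
rewrite /quad_rel -e subrr mul0r => /esym/eqP.
by rewrite mulf_eq0 !subr_eq0 (negbTE d) orbF => /eqP.
Qed.

Lemma neq0_factor (P a b c d : R) : a != b -> c != d ->
  P = (a - b) * (c - d) \/ P = (b - a) * (c - d) -> P != 0.
Proof.
move=> ab cd [|] ->; rewrite mulf_neq0 // subr_eq0 //.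
by rewrite eq_sym.
Qed.

(* Once the z_k are substituted, every denominator left by [field] is a
   difference of two atoms or, up to sign, a product of two of them, each
   known to be nonzero by hypothesis. *)
Ltac nonzero_by_hyps :=
  match goal with
  | h : is_true (?a != ?b) |- is_true (?a - ?b != 0) => by rewrite subr_eq0
  | h : is_true (?b != ?a) |- is_true (?a - ?b != 0) => by rewrite subr_eq0 eq_sym
  | h : is_true (?a != ?b), h' : is_true (?c != ?d) |- _ =>
      apply: (neq0_factor h h'); first [left; ring | right; ring]
  end.

Ltac field_by_hyps := field; repeat (apply/andP; split); nonzero_by_hyps.

Lemma flow_t2_compat_nondeg (xm2 xm1 x0 x1 x2 ym1 y0 y1 zm1 z0 z1 : R) :
  xm2 != xm1 -> xm1 != x0 -> x0 != x1 -> x1 != x2 ->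
  quad_rel xm2 xm1 x0 ym1 zm1 -> quad_rel xm1 x0 x1 y0 z0 -> quad_rel x0 x1 x2 y1 z1 ->
  xm1 != y0 -> y1 != x0 -> ym1 != xm2 ->
  flow_t2_u xm2 xm1 x0 ym1 y0 y1 = flow_t2_v zm1 z0 z1 x0 x1 x2.
Proof.
move=> d1 d2 d3 d4 /(quad_rel_zE d1) -> /(quad_rel_zE d2) -> /(quad_rel_zE d3) -> *.
by rewrite /flow_t2_u /flow_t2_v; field_by_hyps.
Qed.

Lemma linQ2_flow_t2_nondeg (xm3 xm2 xm1 x0 x1 ym2 ym1 y0 y1 y2 zm2 zm1 z0 : R) :
  xm3 != xm2 -> xm2 != xm1 -> xm1 != x0 -> x0 != x1 ->
  quad_rel xm3 xm2 xm1 ym2 zm2 -> quad_rel xm2 xm1 x0 ym1 zm1 -> quad_rel xm1 x0 x1 y0 z0 ->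
  ym2 != xm3 -> ym1 != xm2 -> xm1 != y0 -> y1 != x0 -> y2 != x1 ->
  linQ2_flow_t2 xm2 xm1 x0 x1 ym1 y0 y1 y2 zm2 zm1 z0 = 0.
Proof.
move=> d1 d2 d3 d4 /(quad_rel_zE d1) -> /(quad_rel_zE d2) -> /(quad_rel_zE d3) -> *.
by rewrite /linQ2_flow_t2 /flow_t2_u /flow_t2_v; field_by_hyps.
Qed.

Lemma flow_t2_compat_const (c ym1 y0 y1 zm1 z0 z1 : R) :
  ym1 != c -> c != y0 -> y1 != c -> c != zm1 -> c != z0 -> c != z1 ->
  flow_t2_u c c c ym1 y0 y1 = flow_t2_v zm1 z0 z1 c c c.
Proof. by move=> *; rewrite /flow_t2_u /flow_t2_v; field_by_hyps. Qed.

Lemma linQ2_flow_t2_const (c ym1 y0 y1 y2 zm2 zm1 z0 : R) :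
  ym1 != c -> c != y0 -> y1 != c -> y2 != c -> c != zm2 -> c != zm1 -> c != z0 ->
  linQ2_flow_t2 c c c c ym1 y0 y1 y2 zm2 zm1 z0 = 0.
Proof. by move=> *; rewrite /linQ2_flow_t2 /flow_t2_u /flow_t2_v; field_by_hyps. Qed.

Lemma flow_t2_local (xm3 xm2 xm1 x0 x1 x2 ym2 ym1 y0 y1 y2 zm2 zm1 z0 z1 : R) :
  quad_rel xm3 xm2 xm1 ym2 zm2 -> quad_rel xm2 xm1 x0 ym1 zm1 ->
  quad_rel xm1 x0 x1 y0 z0 -> quad_rel x0 x1 x2 y1 z1 ->
  ym2 != xm3 -> ym1 != xm2 -> xm1 != y0 -> y1 != x0 -> y2 != x1 ->
  xm1 != zm2 -> x0 != zm1 -> x1 != z0 -> x2 != z1 ->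
  flow_t2_u xm2 xm1 x0 ym1 y0 y1 = flow_t2_v zm1 z0 z1 x0 x1 x2 /\
  linQ2_flow_t2 xm2 xm1 x0 x1 ym1 y0 y1 y2 zm2 zm1 z0 = 0.
Proof.
move=> r2 r1 r0 r3 h1 h2 h3 h4 h5 k2 k1 k0 k3.
have [e|d1] := eqVneq xm3 xm2.
  subst xm3; have e := quad_rel_flat h1 r2; subst xm1.
  have e := quad_rel_flat h2 r1; subst x0.
  have e : x1 = xm2 by apply: quad_rel_flat r0; rewrite eq_sym.
  subst x1; have e := quad_rel_flat h4 r3; subst x2.
  by split; [apply: flow_t2_compat_const | apply: linQ2_flow_t2_const].
have d2 := quad_rel_neq d1 k2 r2.
have d3 := quad_rel_neq d2 k1 r1.
have d4 := quad_rel_neq d3 k0 r0.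
have d5 := quad_rel_neq d4 k3 r3.
split; first exact: (flow_t2_compat_nondeg d2 d3 d4 d5 r1 r0 r3).
exact: (linQ2_flow_t2_nondeg d1 d2 d3 d4 r2 r1 r0).
Qed.

Lemma flow_t2E (u v : field R) n m : flow_t2 u v n m =
  cv2 (flow_t2_u (u (n - 2) m) (u (n - 1) m) (u n m) (v n m) (v (n + 1) m) (v (n + 2) m))
      (flow_t2_v (u (n - 2) m) (u (n - 1) m) (u n m) (v n m) (v (n + 1) m) (v (n + 2) m)).
Proof. by rewrite /flow_t2 addr0. Qed.

Lemma solution_vE (u v : field R) a b : is_solution u v -> v a b = u (a - 1) (b - 1).
Proof.
move=> /(_ (a - 1) (b - 1)) [+ _].
by rewrite /Q1 !subrK => /eqP; rewrite subr_eq0 => /eqP ->.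
Qed.

Lemma solution_quad_rel (u v : field R) k l : is_solution u v ->
  quad_rel (u (k - 1) l) (u k l) (u (k + 1) l) (u k (l - 1)) (u k (l + 1)).
Proof.
move=> sol; have [_] := sol k l.
by rewrite /Q2 !(solution_vE _ _ sol) !addrK => /eqP; rewrite subr_eq0 => /eqP.
Qed.

Definition shift (n m : int) (w : field R) : field R := fun a b => w (n + a) (m + b).

Lemma is_solution_shift (u v : field R) n m :
  is_solution u v -> is_solution (shift n m u) (shift n m v).
Proof. by move=> sol a b; move: (sol (n + a) (m + b)); rewrite /shift !addrA. Qed.

Lemma flow_t2_defined_shift (u v : field R) n m :
  flow_t2_defined u v -> flow_t2_defined (shift n m u) (shift n m v).
Proof. by move=> def a b; move: (def (n + a) (m + b)); rewrite /shift !addrA. Qed.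

Lemma flow_t2_shift (u v : field R) n m a b :
  flow_t2 (shift n m u) (shift n m v) a b = flow_t2 u v (n + a) (m + b).
Proof. by rewrite !flow_t2E /shift !addrA. Qed.

Lemma sym_expr_flow_t2_shift (u v : field R) n m :
  sym_expr (@flow_t2 R) u v n m = sym_expr (@flow_t2 R) (shift n m u) (shift n m v) 0 0.
Proof. by rewrite /sym_expr /= !flow_t2_shift /shift !add0r !addr0. Qed.

(* At the origin all lattice indices are closed integers, so the index
   arithmetic (e.g. [0 + 2 - 1] against [1]) is settled by conversion. *)
Lemma sym_expr_flow_t2_origin (u v : field R) :
  is_solution u v -> flow_t2_defined u v -> sym_expr (@flow_t2 R) u v 0 0 = 0.
Proof.
move=> sol def; have vE a b := solution_vE a b sol.
have rel k := solution_quad_rel k 0 sol.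
have [_ [_ h1]] := def (-1) 0.
have [h3 [h4 h2]] := def 0 0.
have [_ [h5 _]] := def 1 0.
have [_ [k0 k2]] := def 0 1.
have [_ [k3 k1]] := def 1 1.
rewrite !vE in h1 h2 h3 h4 h5 k0 k1 k2 k3.
have [compat linQ2] :=
  flow_t2_local (rel (-2)) (rel (-1)) (rel 0) (rel 1) h1 h2 h3 h4 h5 k2 k1 k0 k3.
apply/matrixP => i j; rewrite /sym_expr !flow_t2E !vE.
rewrite !mxE !big_ord_recr !big_ord0 !mxE /=.
case: i => [[|[|//]] ?] /=.
  by rewrite !mul0r !mul1r !addr0 !add0r mulN1r compat subrr.
by apply: etrans linQ2; rewrite /linQ2_flow_t2; ring.
Qed.

End FlowT2.

Theorem mainTheorem9 (R : numFieldType) (u v : field R) :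
  is_solution u v ->
  flow_t2_defined u v ->
  forall n m : int, sym_expr (@flow_t2 R) u v n m = 0.
Proof.
move=> sol def n m; rewrite sym_expr_flow_t2_shift.
exact: sym_expr_flow_t2_origin (is_solution_shift n m sol) (flow_t2_defined_shift n m def).
Qed.
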